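(* Let $N\in\mathbb{N}$, $h=L/N$, $M>0$, $\mathcal{M}_0>0$, let $\mathcal{M}$ be a mobility function and $\phi^n\in\mathcal{C}_{\rm per}$ be such that the face-centered mobility $\check{\mathcal{M}}^n$ satisfies $\check{\mathcal{M}}^n\ge\mathcal{M}_0$ at all face centers. Suppose $\phi_1,\phi_2\in\mathcal{C}_{\rm per}$ satisfy $\langle\phi_1-\phi_2,1\rangle=0$, $\|\phi_1\|_\infty<1$ and $\|\phi_2\|_\infty\le M$. Then $$\|\mathcal{L}_{\check{\mathcal{M}}^n}^{-1}(\phi_1-\phi_2)\|_\infty\le C_4:=C_3\mathcal{M}_0^{-1}h^{-1/2},$$ where $C_3>0$ depends only upon $M$ and $\Omega$.
   Context: $\Omega=(0,L)^3$, periodic; $p_i=(i-\tfrac12)h$. $\mathcal{C}_{\rm per}$: real $N$-periodic grid functions on cell centers; $\langle\nu,\xi\rangle=h^3\sum_{i,j,k=1}^N\nu_{i,j,k}\xi_{i,j,k}$; $\mathring{\mathcal{C}}_{\rm per}$: those with zero sum; $\|\nu\|_\infty=\max|\nu_{i,j,k}|$. The face-centered mobility is $\check{\mathcal{M}}^n_{i+1/2,j,k}=\mathcal{M}(\tfrac12(\phi^n_{i+1,j,k}+\phi^n_{i,j,k}))$ and analogously on $y$- and $z$-faces. For a positive face function $\mathcal{D}$, $\nabla_h\cdot(\mathcal{D}\nabla_h\nu)_{i,j,k}=h^{-2}[\mathcal{D}_{i+1/2,j,k}(\nu_{i+1,j,k}-\nu_{i,j,k})-\mathcal{D}_{i-1/2,j,k}(\nu_{i,j,k}-\nu_{i-1,j,k})]$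 plus the analogous $y$ and $z$ terms. $\mathcal{L}_{\check{\mathcal{M}}^n}^{-1}\psi$, for $\psi\in\mathring{\mathcal{C}}_{\rm per}$, is the unique $v\in\mathring{\mathcal{C}}_{\rm per}$ with $-\nabla_h\cdot(\check{\mathcal{M}}^n\nabla_h v)=\psi$. *)

From HB Require Import structures.
From mathcomp Require Import all_boot all_order all_algebra.
From mathcomp Require Import reals.
Set Implicit Arguments. Unset Strict Implicit. Unset Printing Implicit Defensive.
Import Order.TTheory GRing.Theory Num.Theory.
Local Open Scope ring_scope.

(* Grid functions on cell centers, indexed by integers (i,j,k);
   index i corresponds to the cell center p_{i+1} = (i + 1/2) h. *)
Definition gridfun (R : realType) := int -> int -> int -> R.

Section Grid.
Variable R : realType.
Implicit Types (f g : gridfun R) (N : nat) (h : R).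

Definition periodic N f : Prop :=
  forall i j k : int,
    f (i + N%:Z) j k = f i j k /\ f i (j + N%:Z) k = f i j k /\
    f i j (k + N%:Z) = f i j k.

Definition ip N h f g : R :=
  h ^+ 3 * \sum_(i < N) \sum_(j < N) \sum_(k < N)
      f (Posz i) (Posz j) (Posz k) * g (Posz i) (Posz j) (Posz k).

Definition gone : gridfun R := fun _ _ _ => 1.

Definition gsub f g : gridfun R := fun i j k => f i j k - g i j k.

Definition zero_sum N f : Prop :=
  \sum_(i < N) \sum_(j < N) \sum_(k < N) f (Posz i) (Posz j) (Posz k) = 0.

Definition supnorm N f : R :=
  \big[Num.max/0]_(i < N) \big[Num.max/0]_(j < N) \big[Num.max/0]_(k < N)
      `|f (Posz i) (Posz j) (Posz k)|.

(* face-centered mobility: Mx i j k is the value at face (i+1/2, j, k), etc. *)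
Definition mobx (mob : R -> R) f : gridfun R :=
  fun i j k => mob ((f (i + 1) j k + f i j k) / 2).
Definition moby (mob : R -> R) f : gridfun R :=
  fun i j k => mob ((f i (j + 1) k + f i j k) / 2).
Definition mobz (mob : R -> R) f : gridfun R :=
  fun i j k => mob ((f i j (k + 1) + f i j k) / 2).

(* nabla_h . (D nabla_h v), with D given by its face values on x-, y-, z-faces *)
Definition divgrad h (Dx Dy Dz : gridfun R) (v : gridfun R) : gridfun R :=
  fun i j k =>
    h ^- 2 *
    ( (Dx i j k * (v (i + 1) j k - v i j k)
       - Dx (i - 1) j k * (v i j k - v (i - 1) j k))
    + (Dy i j k * (v i (j + 1) k - v i j k)
       - Dy i (j - 1) k * (v i j k - v i (j - 1) k))
    + (Dz i j k * (v i j (k + 1) - v i j k)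
       - Dz i j (k - 1) * (v i j k - v i j (k - 1))) ).

End Grid.

From HB Require Import structures.
From mathcomp Require Import all_boot all_order all_algebra.
From mathcomp Require Import reals.
From mathcomp Require Import ring lra.
Import Order.TTheory GRing.Theory Num.Theory.
Local Open Scope ring_scope.

(** Testing the equation against v and summing by parts gives
    M0 E <= h^2 <phi1 - phi2, v>, where E is the sum over one period of the squared
    forward differences of v. The discrete Poincare inequality sum v^2 <= 3 N^2 E and
    Young's inequality then give E <= 3 N^5 h^4 (1 + M)^2 / M0^2. A zero-mean grid
    function is bounded pointwise by its energy: at any anchor point, the averages of v
    over the cubes of side 2^k differ by at most sqrt(12 E) (3/4)^k from one k to the
    next, and summing this geometric series gives v^2 <= 192 E. As N^5 h^4 = L^5 / h,
    this is the claimed bound C3 / (M0 sqrt h). *)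

(** * Triple sums and the discrete Poincare inequality *)

Section TripleSums.
Context {R : realDomainType}.
Implicit Types (F G U : nat -> nat -> nat -> R) (W : nat -> R).

Definition sum3 n F : R := \sum_(i < n) \sum_(j < n) \sum_(k < n) F i j k.

Lemma eq_sum3 n F G : (forall i j k, F i j k = G i j k) -> sum3 n F = sum3 n G.
Proof. by move=> eFG; do 3![apply: eq_bigr => ? _]; exact: eFG. Qed.

Lemma ler_sum3 n F G :
  (forall i j k, (i < n)%N -> (j < n)%N -> (k < n)%N -> F i j k <= G i j k) ->
  sum3 n F <= sum3 n G.
Proof. by move=> leFG; do 3![apply: ler_sum => ? _]; exact: leFG. Qed.

Lemma sum3_ge0 n F : (forall i j k, 0 <= F i j k) -> 0 <= sum3 n F.
Proof. by move=> F0; do 3![apply: sumr_ge0 => ? _]; exact: F0. Qed.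

Lemma sum3D n F G :
  sum3 n (fun i j k => F i j k + G i j k) = sum3 n F + sum3 n G.
Proof. by rewrite /sum3 -big_split; do 2![apply: eq_bigr => ? _; rewrite -big_split]. Qed.

Lemma mulr_sum3 n c F : c * sum3 n F = sum3 n (fun i j k => c * F i j k).
Proof. by rewrite /sum3 mulr_sumr; do 2![apply: eq_bigr => ? _; rewrite mulr_sumr]. Qed.

Lemma sum3B n F G :
  sum3 n (fun i j k => F i j k - G i j k) = sum3 n F - sum3 n G.
Proof. by rewrite -mulN1r mulr_sum3 -sum3D; apply: eq_sum3 => i j k; ring. Qed.

Lemma sum3_cst n c : sum3 n (fun _ _ _ => c) = c * n%:R ^+ 3.
Proof.
by rewrite /sum3 !sumr_const !card_ord -!mulrnA -natrX mulr_natr !expnS expn0 muln1.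
Qed.

Lemma sum3_ord1 F : sum3 1 F = F 0%N 0%N 0%N.
Proof. by rewrite /sum3 !big_ord1. Qed.

Lemma ler_sum_widen W m n : (m <= n)%N -> (forall i, 0 <= W i) ->
  \sum_(i < m) W i <= \sum_(i < n) W i.
Proof.
move=> mn W0; rewrite -!(big_mkord xpredT) (big_cat_nat (leq0n m) mn) /=.
by rewrite lerDl sumr_ge0.
Qed.

Lemma sum3_widen m n F : (m <= n)%N -> (forall i j k, 0 <= F i j k) ->
  sum3 m F <= sum3 n F.
Proof.
move=> mn F0; rewrite /sum3.
apply: (@le_trans _ _ (\sum_(i < m) \sum_(j < n) \sum_(k < n) F i j k)).
  apply: ler_sum => i _; apply: (@le_trans _ _ (\sum_(j < m) \sum_(k < n) F i j k)).
    by apply: ler_sum => j _; apply: (ler_sum_widen (F i j)).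
  by apply: (ler_sum_widen (fun j => \sum_(k < n) F i j k)) => // j; exact: sumr_ge0.
apply: (ler_sum_widen (fun i => \sum_(j < n) \sum_(k < n) F i j k)) => // i.
by do 2!apply: sumr_ge0 => ? _.
Qed.

Lemma sqr_sum_le W p : (\sum_(i < p) W i) ^+ 2 <= p%:R * \sum_(i < p) W i ^+ 2.
Proof.
elim: p => [|p IH]; first by rewrite !big_ord0 expr0n mul0r.
rewrite !big_ord_recr /= -natr1.
move: IH; set s := \sum_(i < p) _; set Q := \sum_(i < p) _; set x := W p => IH.
have Q0 : 0 <= Q by apply: sumr_ge0 => i _; exact: sqr_ge0.
have [p0|p_gt0] := posnP p.
  by rewrite /s /Q p0 !big_ord0 !add0r mul1r.
have := sqr_ge0 (s - p%:R * x); have : 0 < p%:R :> R by rewrite ltr0n.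
nra.
Qed.

Lemma sqr_sum3_le n F : sum3 n F ^+ 2 <= n%:R ^+ 3 * sum3 n (fun i j k => F i j k ^+ 2).
Proof.
have n0 : 0 <= n%:R :> R := ler0n _ _.
apply: le_trans (sqr_sum_le (fun i => \sum_(j < n) \sum_(k < n) F i j k) n) _.
rewrite exprS -mulrA; apply: ler_wpM2l => //; rewrite mulr_sumr; apply: ler_sum => i _.
apply: le_trans (sqr_sum_le (fun j => \sum_(k < n) F i j k) n) _.
rewrite expr2 -mulrA; apply: ler_wpM2l => //; rewrite mulr_sumr; apply: ler_sum => j _.
exact: (sqr_sum_le (F i j)).
Qed.

Lemma sum3_drop1 n (H : nat -> nat -> R) :
  sum3 n (fun _ j k => H j k) = n%:R * \sum_(j < n) \sum_(k < n) H j k.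
Proof. by rewrite /sum3 sumr_const card_ord mulr_natl. Qed.

Lemma sum3_drop3 n (H : nat -> nat -> R) :
  sum3 n (fun i j _ => H i j) = n%:R * \sum_(i < n) \sum_(j < n) H i j.
Proof.
rewrite /sum3 mulr_sumr; apply: eq_bigr => i _; rewrite mulr_sumr.
by apply: eq_bigr => j _; rewrite sumr_const card_ord mulr_natl.
Qed.

Lemma sum3_only1 n W : sum3 n (fun i _ _ => W i) = n%:R ^+ 2 * \sum_(i < n) W i.
Proof.
rewrite /sum3 mulr_sumr; apply: eq_bigr => i _.
by rewrite !sumr_const !card_ord -mulrnA -natrX mulr_natl mulnn.
Qed.

Lemma sum3_only3 n W : sum3 n (fun _ _ k => W k) = n%:R ^+ 2 * \sum_(k < n) W k.
Proof.
by rewrite sum3_drop1 sumr_const card_ord -[(\sum_(k < n) W k) *+ n]mulr_natl mulrA -expr2.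
Qed.

Lemma sqr_sub_le_steps W {n i j} : (i <= n)%N -> (j <= n)%N ->
  (W j - W i) ^+ 2 <= n%:R * \sum_(k < n) (W k.+1 - W k) ^+ 2.
Proof.
move=> le_in le_jn.
have telescope l : (l <= n)%N ->
    W l - W 0%N = \sum_(k < n) (k < l)%N%:R * (W k.+1 - W k).
  move=> le_ln; rewrite -(telescope_sumr W (leq0n l)) big_mkord.
  rewrite (big_ord_widen n (fun k => W k.+1 - W k) le_ln) big_mkcond /=.
  by apply: eq_bigr => k _; case: ifP; rewrite ?mul1r ?mul0r.
have -> : W j - W i = \sum_(k < n) ((k < j)%N%:R - (k < i)%N%:R) * (W k.+1 - W k).
  have -> : W j - W i = (W j - W 0%N) - (W i - W 0%N) by ring.
  by rewrite (telescope _ le_jn) (telescope _ le_in) -sumrB; apply: eq_bigr => k _; ring.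
apply: le_trans (sqr_sum_le (fun k => ((k < j)%N%:R - (k < i)%N%:R) * (W k.+1 - W k)) n) _.
apply: ler_wpM2l => //; apply: ler_sum => k _; rewrite exprMn ler_piMl ?sqr_ge0 //.
by case: (k < j)%N; case: (k < i)%N; rewrite ?subrr ?subr0 ?sub0r ?sqrrN ?expr1n ?expr0n.
Qed.

Definition grad2 U i j k :=
  (U i.+1 j k - U i j k) ^+ 2 + (U i j.+1 k - U i j k) ^+ 2 + (U i j k.+1 - U i j k) ^+ 2.

Lemma grad2_ge0 U i j k : 0 <= grad2 U i j k.
Proof. by rewrite /grad2 !addr_ge0 ?sqr_ge0. Qed.

Lemma sqr_add3_le (a b c : R) : (a + b + c) ^+ 2 <= 3 * (a ^+ 2 + b ^+ 2 + c ^+ 2).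
Proof. have := sqr_ge0 (a - b); have := sqr_ge0 (b - c); have := sqr_ge0 (a - c); nra. Qed.

Lemma sum3_sqr_sub_le n U :
  sum3 n (fun x1 x2 x3 => sum3 n (fun y1 y2 y3 => (U x1 x2 x3 - U y1 y2 y3) ^+ 2))
  <= 3 * n%:R ^+ 5 * sum3 n (grad2 U).
Proof.
pose Lx j k := \sum_(i < n) (U i.+1 j k - U i j k) ^+ 2.
pose Ly i k := \sum_(j < n) (U i j.+1 k - U i j k) ^+ 2.
pose Lz i j := \sum_(k < n) (U i j k.+1 - U i j k) ^+ 2.
have path_le x1 x2 x3 y1 y2 y3 : (x1 <= n)%N -> (x2 <= n)%N -> (x3 <= n)%N ->
    (y1 <= n)%N -> (y2 <= n)%N -> (y3 <= n)%N ->
    (U x1 x2 x3 - U y1 y2 y3) ^+ 2 <= 3 * n%:R * (Lx x2 x3 + Ly y1 x3 + Lz y1 y2).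
  move=> x1n x2n x3n y1n y2n y3n.
  have -> : U x1 x2 x3 - U y1 y2 y3 = (U x1 x2 x3 - U y1 x2 x3)
      + (U y1 x2 x3 - U y1 y2 x3) + (U y1 y2 x3 - U y1 y2 y3) by ring.
  have := sqr_sub_le_steps (fun t => U t x2 x3) y1n x1n.
  have := sqr_sub_le_steps (fun t => U y1 t x3) y2n x2n.
  have := sqr_sub_le_steps (fun t => U y1 y2 t) y3n x3n.
  have := sqr_add3_le (U x1 x2 x3 - U y1 x2 x3) (U y1 x2 x3 - U y1 y2 x3)
    (U y1 y2 x3 - U y1 y2 y3).
  rewrite /Lx /Ly /Lz /=; lra.
have sum_paths : sum3 n (fun _ x2 x3 => sum3 n (fun y1 y2 _ => Lx x2 x3 + Ly y1 x3 + Lz y1 y2))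
    = n%:R ^+ 4 * sum3 n (grad2 U).
  have sum3_Lx : sum3 n (fun i j k => (U i.+1 j k - U i j k) ^+ 2)
      = \sum_(j < n) \sum_(k < n) Lx j k.
    by rewrite /sum3 exchange_big; apply: eq_bigr => j _; rewrite exchange_big.
  have sum3_Ly : sum3 n (fun i j k => (U i j.+1 k - U i j k) ^+ 2)
      = \sum_(k < n) \sum_(i < n) Ly i k.
    by rewrite /sum3 [RHS]exchange_big; apply: eq_bigr => i _; rewrite exchange_big.
  rewrite (eq_sum3 _ _ (fun _ x2 x3 => n%:R ^+ 3 * Lx x2 x3 + n%:R ^+ 2 * \sum_(i < n) Ly i x3
      + n%:R * \sum_(i < n) \sum_(j < n) Lz i j)); last first.
    by move=> x1 x2 x3; rewrite !sum3D sum3_cst sum3_only1 sum3_drop3 mulrC.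
  rewrite !sum3D -!mulr_sum3 sum3_drop1 sum3_only3 sum3_cst sum3_Lx sum3_Ly.
  by rewrite /sum3; ring.
apply: (@le_trans _ _ (3 * n%:R * sum3 n (fun x1 x2 x3 => sum3 n (fun y1 y2 y3 =>
    Lx x2 x3 + Ly y1 x3 + Lz y1 y2)))).
  rewrite mulr_sum3; apply: ler_sum3 => x1 x2 x3 /ltnW x1n /ltnW x2n /ltnW x3n.
  rewrite mulr_sum3; apply: ler_sum3 => y1 y2 y3 /ltnW y1n /ltnW y2n /ltnW y3n.
  exact: path_le.
by rewrite sum_paths mulrA -(mulrA 3) -exprS.
Qed.

Lemma sum3_cst_sub n c U : sum3 n (fun i j k => c - U i j k) = c * n%:R ^+ 3 - sum3 n U.
Proof. by rewrite sum3B sum3_cst. Qed.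

Lemma sum3_sqr_le_grad2 n U : sum3 n U = 0 ->
  sum3 n (fun i j k => U i j k ^+ 2) <= 3 * n%:R ^+ 2 * sum3 n (grad2 U).
Proof.
move=> U_sum0; have [->|n_gt0] := posnP n; first by rewrite /sum3 !big_ord0 mulr0.
have n3_gt0 : 0 < n%:R ^+ 3 :> R by rewrite exprn_gt0 ?ltr0n.
have pointwise x1 x2 x3 : n%:R ^+ 3 * U x1 x2 x3 ^+ 2
    <= sum3 n (fun y1 y2 y3 => (U x1 x2 x3 - U y1 y2 y3) ^+ 2).
  rewrite -(ler_pM2l n3_gt0) mulrA -expr2 -exprMn.
  have -> : n%:R ^+ 3 * U x1 x2 x3 = sum3 n (fun y1 y2 y3 => U x1 x2 x3 - U y1 y2 y3).
    by rewrite sum3_cst_sub U_sum0 subr0 mulrC.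
  exact: sqr_sum3_le.
rewrite -(ler_pM2l n3_gt0) [X in X <= _]mulr_sum3.
apply: (le_trans (y := sum3 n (fun x1 x2 x3 =>
    sum3 n (fun y1 y2 y3 => (U x1 x2 x3 - U y1 y2 y3) ^+ 2)))).
  by apply: ler_sum3 => x1 x2 x3 _ _ _; exact: pointwise.
have -> : n%:R ^+ 3 * (3 * n%:R ^+ 2 * sum3 n (grad2 U)) = 3 * n%:R ^+ 5 * sum3 n (grad2 U).
  by ring.
exact: sum3_sqr_sub_le.
Qed.

End TripleSums.

(** * Dyadic averages *)

Section CubeAverages.
Context {R : realFieldType}.
Implicit Types (U : nat -> nat -> nat -> R).

Definition cube_avg n U := sum3 n U / n%:R ^+ 3.

Lemma sqr_cube_avg_sub_le m n U : (0 < m)%N -> (m <= n)%N ->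
  (cube_avg m U - cube_avg n U) ^+ 2 <= 3 * n%:R ^+ 2 / m%:R ^+ 3 * sum3 n (grad2 U).
Proof.
move=> m_gt0 mn; have n_gt0 : (0 < n)%N := leq_trans m_gt0 mn.
have m3_gt0 : 0 < m%:R ^+ 3 :> R by rewrite exprn_gt0 ?ltr0n.
have n3_gt0 : 0 < n%:R ^+ 3 :> R by rewrite exprn_gt0 ?ltr0n.
set D := sum3 m (fun x1 x2 x3 => sum3 n (fun y1 y2 y3 => U x1 x2 x3 - U y1 y2 y3)).
have D_sqr : D ^+ 2 <= m%:R ^+ 3 * n%:R ^+ 3 * (3 * n%:R ^+ 5 * sum3 n (grad2 U)).
  apply: le_trans (sqr_sum3_le _ _) _; rewrite -mulrA ler_pM2l //.
  apply: (le_trans (y := sum3 m (fun x1 x2 x3 =>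
      n%:R ^+ 3 * sum3 n (fun y1 y2 y3 => (U x1 x2 x3 - U y1 y2 y3) ^+ 2)))).
    by apply: ler_sum3 => *; exact: sqr_sum3_le.
  rewrite -mulr_sum3 ler_pM2l //; apply: le_trans _ (sum3_sqr_sub_le n U).
  by apply: sum3_widen => // *; apply: sum3_ge0 => *; exact: sqr_ge0.
have -> : cube_avg m U - cube_avg n U = D / (m%:R ^+ 3 * n%:R ^+ 3).
  rewrite /D (eq_sum3 _ _ (fun x1 x2 x3 => n%:R ^+ 3 * U x1 x2 x3 - sum3 n U)); last first.
    by move=> *; rewrite sum3_cst_sub mulrC.
  by rewrite sum3B sum3_cst -mulr_sum3 /cube_avg; field; rewrite !pnatr_eq0 -!lt0n n_gt0 m_gt0.
rewrite expr_div_n ler_pdivrMr; last by rewrite exprn_gt0 // mulr_gt0.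
suff -> : 3 * n%:R ^+ 2 / m%:R ^+ 3 * sum3 n (grad2 U) * (m%:R ^+ 3 * n%:R ^+ 3) ^+ 2
  = m%:R ^+ 3 * n%:R ^+ 3 * (3 * n%:R ^+ 5 * sum3 n (grad2 U)) by [].
by field; rewrite pnatr_eq0 -lt0n.
Qed.
End CubeAverages.

Lemma norm_le_of_sqr_le {R : realDomainType} (x y : R) :
  0 <= y -> x ^+ 2 <= y ^+ 2 -> `|x| <= y.
Proof. by move=> y0 xy; rewrite -ler_sqr ?nnegrE // real_normK ?num_real. Qed.

Section DyadicAverages.
Context {R : rcfType}.
Implicit Types (U : nat -> nat -> nat -> R).

Lemma cube_avg_dyadic_step U {k n E} : (2 ^ k <= n <= 2 * 2 ^ k)%N ->
  sum3 n (grad2 U) <= E ->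
  `|cube_avg (2 ^ k) U - cube_avg n U| <= Num.sqrt (12 * E) * (3 / 4) ^+ k.
Proof.
move=> /andP[lo hi] gradE; set m := (2 ^ k)%N.
have m_pos : (0 < m)%N by rewrite expn_gt0.
have m_gt0 : 0 < m%:R :> R by rewrite ltr0n.
have E0 : 0 <= E by apply: le_trans gradE; apply: sum3_ge0 => *; exact: grad2_ge0.
(* 3/4 exceeds 1/sqrt 2, so (9/16)^k dominates 2^-k without introducing sqrt 2. *)
have coef_le : 3 * n%:R ^+ 2 / m%:R ^+ 3 <= 12 * (9 / 16) ^+ k :> R.
  have n2m : n%:R <= 2 * m%:R :> R by rewrite -natrM ler_nat.
  have dyadic : 1 <= m%:R * (9 / 16) ^+ k :> R.
    by rewrite /m natrX -exprMn exprn_ege1 //; lra.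
  rewrite ler_pdivrMr ?exprn_gt0 //.
  have := ler0n R n; have : 0 <= (9 / 16) ^+ k :> R by apply: exprn_ge0; lra.
  nra.
have sqrt_nneg : 0 <= Num.sqrt (12 * E) * (3 / 4) ^+ k.
  by rewrite mulr_ge0 ?sqrtr_ge0 // exprn_ge0 //; lra.
apply: norm_le_of_sqr_le => //.
rewrite exprMn sqr_sqrtr ?mulr_ge0 // -exprM mulnC exprM.
apply: le_trans (sqr_cube_avg_sub_le _ _ U m_pos lo) _.
have -> : (3 / 4) ^+ 2 = 9 / 16 :> R by field.
have : 0 <= sum3 n (grad2 U) by apply: sum3_ge0 => *; exact: grad2_ge0.
have : 0 <= (9 / 16) ^+ k :> R by apply: exprn_ge0; lra.
nra.
Qed.

Lemma cube_avg_dyadic_chain U {k E} : (forall n, (n <= 2 ^ k)%N -> sum3 n (grad2 U) <= E) ->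
  `|U 0%N 0%N 0%N - cube_avg (2 ^ k) U| <= 4 * Num.sqrt (12 * E) * (1 - (3 / 4) ^+ k).
Proof.
elim: k => [|k IH] gradE.
  by rewrite /cube_avg sum3_ord1 expr1n divr1 subrr normr0 expr0 subrr mulr0.
have le_2k : (2 ^ k <= 2 ^ k.+1)%N by rewrite leq_exp2l.
have := IH (fun n le_n => gradE n (leq_trans le_n le_2k)).
have range : (2 ^ k <= 2 ^ k.+1 <= 2 * 2 ^ k)%N by rewrite -expnS le_2k leqnn.
have := cube_avg_dyadic_step U range (gradE _ (leqnn _)).
have := ler_normD (U 0%N 0%N 0%N - cube_avg (2 ^ k) U)
  (cube_avg (2 ^ k) U - cube_avg (2 ^ k.+1) U).
rewrite addrA subrK exprS.
have : 0 <= Num.sqrt (12 * E) * (3 / 4) ^+ k.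
  by rewrite mulr_ge0 ?sqrtr_ge0 // exprn_ge0 //; lra.
nra.
Qed.

Lemma sqr_corner_le_grad2 U N : (0 < N)%N -> sum3 N U = 0 ->
  U 0%N 0%N 0%N ^+ 2 <= 192 * sum3 N (grad2 U).
Proof.
move=> N_gt0 U_sum0; set E := sum3 N (grad2 U).
have E0 : 0 <= E by apply: sum3_ge0 => *; exact: grad2_ge0.
have gradE n : (n <= N)%N -> sum3 n (grad2 U) <= E.
  by move=> le_nN; apply: sum3_widen => // *; exact: grad2_ge0.
set K := trunc_log 2 N; have le_KN : (2 ^ K <= N)%N by apply: trunc_logP.
have range : (2 ^ K <= N <= 2 * 2 ^ K)%N by rewrite le_KN -expnS ltnW ?trunc_log_ltn.
have chain := cube_avg_dyadic_chain U (fun n le_n => gradE n (leq_trans le_n le_KN)).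
have step := cube_avg_dyadic_step U range (gradE _ (leqnn _)).
rewrite [cube_avg N U]/cube_avg U_sum0 mul0r subr0 in step.
have := ler_normD (U 0%N 0%N 0%N - cube_avg (2 ^ K) U) (cube_avg (2 ^ K) U).
rewrite subrK => U0_le.
have U0_abs : `|U 0%N 0%N 0%N| <= 4 * Num.sqrt (12 * E).
  have : 0 <= Num.sqrt (12 * E) * (3 / 4) ^+ K.
    by rewrite mulr_ge0 ?sqrtr_ge0 // exprn_ge0 //; lra.
  nra.
rewrite -real_normK ?num_real //; apply: (@le_trans _ _ ((4 * Num.sqrt (12 * E)) ^+ 2)).
  by rewrite ler_sqr ?nnegrE ?mulr_ge0 ?sqrtr_ge0.
by rewrite exprMn sqr_sqrtr ?mulr_ge0 //; lra.
Qed.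
End DyadicAverages.

(** * Periodic grid functions *)

Section PeriodicGrid.
Context {R : realType}.
Implicit Types (f g v D : gridfun R).

Definition period_sum N g : R := sum3 N (fun i j k => g i%:Z j%:Z k%:Z).

Definition translate g (a b c : int) : gridfun R := fun x y z => g (x + a) (y + b) (z + c).

Lemma sum_periodic_translate N (G : int -> R) (a : int) :
  (forall x, G (x + N%:Z) = G x) -> \sum_(i < N) G (i%:Z + a) = \sum_(i < N) G i%:Z.
Proof.
have shiftn (H : int -> R) n : (forall x, H (x + N%:Z) = H x) ->
    \sum_(i < N) H (i%:Z + n%:Z) = \sum_(i < N) H i%:Z.
  move=> perH; elim: n => [|n IH]; first by apply: eq_bigr => i _; rewrite addr0.
  rewrite -IH; case: N perH {IH} => [|N] perH; first by rewrite !big_ord0.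
  rewrite big_ord_recr big_ord_recl /= addrC add0r -[H n%:Z]perH -!PoszD !addnS addnC.
  by congr (_ + _); apply: eq_bigr => i _; rewrite /bump leq0n add1n -!PoszD addSnnS.
move=> perG; case: a => n; first exact: shiftn.
rewrite -(shiftn (fun x => G (x + Negz n)) n.+1); last by move=> x; rewrite addrAC perG.
by apply: eq_bigr => i _; rewrite NegzE addrK.
Qed.

Variable N : nat.

Lemma period_sum_translate {g} a b c : periodic N g ->
  period_sum N (translate g a b c) = period_sum N g.
Proof.
move=> perg; rewrite /period_sum /sum3 /translate.
rewrite (sum_periodic_translate _
    (fun x => \sum_(j < N) \sum_(k < N) g x (j%:Z + b) (k%:Z + c)));
  last by move=> x; apply: eq_bigr => j _; apply: eq_bigr => k _; exact: (perg _ _ _).1.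
apply: eq_bigr => i _.
rewrite (sum_periodic_translate _ (fun y => \sum_(k < N) g i%:Z y (k%:Z + c)));
  last by move=> y; apply: eq_bigr => k _; exact: (perg _ _ _).2.1.
apply: eq_bigr => j _.
by apply: (sum_periodic_translate _ (fun z => g i%:Z j%:Z z)) => z; exact: (perg _ _ _).2.2.
Qed.

Lemma periodic_translate {g} a b c : periodic N g -> periodic N (translate g a b c).
Proof. by move=> perg x y z; rewrite /translate !(addrAC _ N%:Z); exact: perg. Qed.

Lemma periodic_map2 (op : R -> R -> R) {g1 g2} : periodic N g1 -> periodic N g2 ->
  periodic N (fun x y z => op (g1 x y z) (g2 x y z)).
Proof.
by move=> per1 per2 x y z; have [-> [-> ->]] := per1 x y z; have [-> [-> ->]] := per2 x y z.
Qed.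

Lemma periodic_mob (mob : R -> R) {p : gridfun R} : periodic N p ->
  [/\ periodic N (mobx mob p), periodic N (moby mob p) & periodic N (mobz mob p)].
Proof.
move=> perp; split=> x y z; rewrite /mobx /moby /mobz !(addrAC _ N%:Z);
  have [-> [-> ->]] := perp x y z.
- by have [-> [-> ->]] := perp (x + 1) y z.
- by have [-> [-> ->]] := perp x (y + 1) z.
- by have [-> [-> ->]] := perp x y (z + 1).
Qed.

Definition grid_grad2 v : gridfun R := fun x y z =>
  (v (x + 1) y z - v x y z) ^+ 2 + (v x (y + 1) z - v x y z) ^+ 2 + (v x y (z + 1) - v x y z) ^+ 2.

Lemma periodic_grid_grad2 {v} : periodic N v -> periodic N (grid_grad2 v).
Proof.
move=> perv x y z; rewrite /grid_grad2 !(addrAC _ N%:Z); have [-> [-> ->]] := perv x y z.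
by have [-> [-> ->]] := perv (x + 1) y z; have [-> [-> ->]] := perv x (y + 1) z;
  have [-> [-> ->]] := perv x y (z + 1).
Qed.

Lemma sum3_grad2 g :
  sum3 N (grad2 (fun i j k => g i%:Z j%:Z k%:Z)) = period_sum N (grid_grad2 g).
Proof. by apply: eq_sum3 => i j k; rewrite /grad2 /grid_grad2 !intS !(addrC 1). Qed.

Lemma sum3_grad2_translate {v} a b c : periodic N v ->
  sum3 N (grad2 (fun i j k => translate v a b c i%:Z j%:Z k%:Z)) = period_sum N (grid_grad2 v).
Proof.
move=> perv; rewrite sum3_grad2 -(period_sum_translate a b c (periodic_grid_grad2 perv)).
by apply: eq_sum3 => i j k; rewrite /grid_grad2 /translate !(addrAC _ 1).
Qed.

Lemma ler_supnorm f (i j k : 'I_N) : `|f i j k| <= supnorm N f.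
Proof.
rewrite /supnorm; apply: le_trans _ (le_bigmax _ _ i); apply: le_trans _ (le_bigmax _ _ j).
exact: (le_bigmax _ (fun k : 'I_N => `|f i j k|)).
Qed.

Lemma supnorm_le f B : 0 <= B -> (forall i j k : 'I_N, `|f i j k| <= B) -> supnorm N f <= B.
Proof. by move=> B0 fB; rewrite /supnorm; do 3!apply: bigmax_le => // ? _; exact: fB. Qed.

(** * Summation by parts and the energy estimate *)

Lemma period_sum_by_parts {D v} a b c : periodic N D -> periodic N v ->
  period_sum N (fun x y z =>
    D (x - a) (y - b) (z - c) * (v x y z - v (x - a) (y - b) (z - c)) * v x y z)
  = period_sum N (fun x y z =>
    D x y z * (v (x + a) (y + b) (z + c) - v x y z) * v (x + a) (y + b) (z + c)).
Proof.
move=> perD perv.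
pose G x y z := D x y z * (v (x + a) (y + b) (z + c) - v x y z) * v (x + a) (y + b) (z + c).
have perG : periodic N G.
  have perva := periodic_translate a b c perv.
  have perdiff := periodic_map2 (fun s t => s - t) perva perv.
  have perprod := periodic_map2 *%R perD perdiff.
  by have := periodic_map2 *%R perprod perva.
rewrite -(period_sum_translate (- a) (- b) (- c) perG).
by apply: eq_sum3 => i j k; rewrite /G /translate !subrK.
Qed.

Lemma period_sum_divgrad_mul h D1 D2 D3 v :
  periodic N D1 -> periodic N D2 -> periodic N D3 -> periodic N v ->
  period_sum N (fun x y z => divgrad h D1 D2 D3 v x y z * v x y z)
  = - h ^- 2 * period_sum N (fun x y z => D1 x y z * (v (x + 1) y z - v x y z) ^+ 2
      + D2 x y z * (v x (y + 1) z - v x y z) ^+ 2 + D3 x y z * (v x y (z + 1) - v x y z) ^+ 2).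
Proof.
move=> perD1 perD2 perD3 perv.
have := period_sum_by_parts 1 0 0 perD1 perv.
rewrite /period_sum => /eqP; rewrite -subr_eq0 -sum3B => /eqP px.
have := period_sum_by_parts 0 1 0 perD2 perv.
rewrite /period_sum => /eqP; rewrite -subr_eq0 -sum3B => /eqP py.
have := period_sum_by_parts 0 0 1 perD3 perv.
rewrite /period_sum => /eqP; rewrite -subr_eq0 -sum3B => /eqP pz.
have := congr2 +%R (congr2 +%R px py) pz; rewrite -!sum3D !addr0 => parts.
apply/eqP; rewrite -subr_eq0 mulNr opprK mulr_sum3 -sum3D -(mulr0 (- h ^- 2)) -parts mulr_sum3.
(* [!subr0] also clears the shifts [y + 0]: in [int], [0] and [- 0] are convertible. *)
by apply/eqP/eq_sum3 => i j k; rewrite /divgrad !subr0; ring.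
Qed.

Lemma sqr_le_grid_grad2 {v} a b c : (0 < N)%N -> periodic N v -> zero_sum N v ->
  v a b c ^+ 2 <= 192 * period_sum N (grid_grad2 v).
Proof.
move=> N_gt0 perv v_sum0; pose U i j k := translate v a b c i%:Z j%:Z k%:Z.
have U_sum0 : sum3 N U = 0 := etrans (period_sum_translate a b c perv) v_sum0.
have := sqr_corner_le_grad2 U N N_gt0 U_sum0.
by rewrite sum3_grad2_translate // /U /translate !add0r.
Qed.

Lemma grid_grad2_coercive {h M0 D1 D2 D3 v f} : 0 < h ->
  (forall x y z, M0 <= D1 x y z /\ M0 <= D2 x y z /\ M0 <= D3 x y z) ->
  periodic N D1 -> periodic N D2 -> periodic N D3 -> periodic N v ->
  (forall x y z, - divgrad h D1 D2 D3 v x y z = f x y z) ->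
  M0 * period_sum N (grid_grad2 v) <= h ^+ 2 * period_sum N (fun x y z => f x y z * v x y z).
Proof.
move=> h_gt0 DM0 perD1 perD2 perD3 perv eqn.
rewrite (_ : h ^+ 2 * _ =
    - h ^+ 2 * period_sum N (fun x y z => divgrad h D1 D2 D3 v x y z * v x y z)); last first.
  by rewrite /period_sum !mulr_sum3; apply: eq_sum3 => i j k; rewrite -eqn; ring.
rewrite period_sum_divgrad_mul // !mulNr mulrN opprK mulrA mulfV ?mul1r ?expf_neq0 ?gt_eqF //.
rewrite /period_sum mulr_sum3; apply: ler_sum3 => i j k _ _ _.
have [M0D1 [M0D2 M0D3]] := DM0 i j k; rewrite /grid_grad2 !mulrDr.
by rewrite !lerD ?ler_wpM2r ?sqr_ge0.
Qed.

Lemma grid_grad2_energy_le {h M0 F D1 D2 D3 v f} : (0 < N)%N -> 0 < h -> 0 < M0 ->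
  (forall x y z, M0 <= D1 x y z /\ M0 <= D2 x y z /\ M0 <= D3 x y z) ->
  periodic N D1 -> periodic N D2 -> periodic N D3 -> periodic N v -> zero_sum N v ->
  (forall i j k : 'I_N, `|f i j k| <= F) ->
  (forall x y z, - divgrad h D1 D2 D3 v x y z = f x y z) ->
  period_sum N (grid_grad2 v) <= 3 * N%:R ^+ 5 * h ^+ 4 * F ^+ 2 / M0 ^+ 2.
Proof.
move=> N_gt0 h_gt0 M0_gt0 DM0 perD1 perD2 perD3 perv v_sum0 fF eqn.
set E := period_sum N (grid_grad2 v); set S := period_sum N (fun x y z => f x y z * v x y z).
have coercive : M0 * E <= h ^+ 2 * S := grid_grad2_coercive h_gt0 DM0 perD1 perD2 perD3 perv eqn.
set V2 := period_sum N (fun x y z => v x y z ^+ 2).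
have poincare : V2 <= 3 * N%:R ^+ 2 * E.
  by rewrite /E -sum3_grad2; exact: (sum3_sqr_le_grad2 N (fun i j k => v i%:Z j%:Z k%:Z) v_sum0).
have young t : 2 * t * S <= t ^+ 2 * (F ^+ 2 * N%:R ^+ 3) + V2.
  rewrite /S /V2 /period_sum -sum3_cst !mulr_sum3 -sum3D.
  apply: ler_sum3 => i j k lt_iN lt_jN lt_kN.
  have /= f_le := fF (Ordinal lt_iN) (Ordinal lt_jN) (Ordinal lt_kN).
  have f2_le : f i j k ^+ 2 <= F ^+ 2.
    by rewrite -real_normK ?num_real // ler_sqr ?nnegrE // (le_trans _ f_le).
  have := sqr_ge0 (t * f i j k - v i j k); have := sqr_ge0 t; nra.
set n := N%:R; set t := 3 * n ^+ 2 * h ^+ 2 / M0.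
have tS_ge : 6 * n ^+ 2 * E <= 2 * t * S.
  have -> : 2 * t * S = 6 * n ^+ 2 / M0 * (h ^+ 2 * S) by rewrite /t; field; rewrite gt_eqF.
  have -> : 6 * n ^+ 2 * E = 6 * n ^+ 2 / M0 * (M0 * E) by field; rewrite gt_eqF.
  by apply: ler_wpM2l => //; rewrite divr_ge0 ?mulr_ge0 ?exprn_ge0 ?ler0n ?ltW.
have n_gt0 : 0 < n by rewrite ltr0n.
have : 3 * n ^+ 2 * E <= t ^+ 2 * (F ^+ 2 * n ^+ 3) by have := young t; lra.
suff -> : 3 * n ^+ 5 * h ^+ 4 * F ^+ 2 / M0 ^+ 2 = t ^+ 2 * (F ^+ 2 * n ^+ 3) / (3 * n ^+ 2).
  by rewrite ler_pdivlMr ?mulr_gt0 ?exprn_gt0 // mulrC.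
by rewrite /t; field; rewrite !gt_eqF.
Qed.

End PeriodicGrid.

Theorem lemma3p2 (R : realType) (L : R) (Mb : R) :
  0 < L -> 0 < Mb ->
  exists C3 : R, 0 < C3 /\
  forall (N : nat) (M0 : R) (mob : R -> R) (phin phi1 phi2 v : gridfun R),
    (0 < N)%N -> 0 < M0 ->
    periodic N phin -> periodic N phi1 -> periodic N phi2 ->
    (forall i j k : int,
        M0 <= mobx mob phin i j k /\ M0 <= moby mob phin i j k /\
        M0 <= mobz mob phin i j k) ->
    ip N (L / N%:R) (gsub phi1 phi2) (@gone R) = 0 ->
    supnorm N phi1 < 1 ->
    supnorm N phi2 <= Mb ->
    (* v = L_{M^n}^{-1}(phi1 - phi2): the zero-mean periodic solution of
       - nabla_h . (M^n nabla_h v) = phi1 - phi2 *)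
    periodic N v -> zero_sum N v ->
    (forall i j k : int,
        - divgrad (L / N%:R) (mobx mob phin) (moby mob phin) (mobz mob phin) v i j k
        = gsub phi1 phi2 i j k) ->
    supnorm N v <= C3 / M0 / Num.sqrt (L / N%:R).
Proof.
move=> L_gt0 Mb_gt0; set F := 1 + Mb; have F_gt0 : 0 < F by rewrite /F; lra.
exists (24 * F * L ^+ 2 * Num.sqrt L); split; first by rewrite !mulr_gt0 ?exprn_gt0 ?sqrtr_gt0.
(* The mean-zero condition on phi1 - phi2 is implied by the equation. *)
move=> N M0 mob phin phi1 phi2 v N_gt0 M0_gt0 perphin _ _ mobM0 _ phi1_lt phi2_le.
move=> perv v_sum0 eqn.
set h := L / N%:R in eqn *.
have h_gt0 : 0 < h by rewrite divr_gt0 ?ltr0n.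
have [perx pery perz] := periodic_mob N mob perphin.
have rhs_le (i j k : 'I_N) : `|gsub phi1 phi2 i j k| <= F.
  apply: le_trans (ler_normB _ _) _; have := ler_supnorm N phi1 i j k.
  have := ler_supnorm N phi2 i j k; rewrite /F; lra.
have energy_le :=
  grid_grad2_energy_le N N_gt0 h_gt0 M0_gt0 mobM0 perx pery perz perv v_sum0 rhs_le eqn.
have C_ge0 : 0 <= 24 * F * L ^+ 2 * Num.sqrt L / M0 / Num.sqrt h.
  by rewrite !divr_ge0 ?mulr_ge0 ?exprn_ge0 ?sqrtr_ge0 ?ltW.
apply: supnorm_le => // i j k; apply: norm_le_of_sqr_le => //.
apply: le_trans (sqr_le_grid_grad2 N i j k N_gt0 perv v_sum0) _.
rewrite !expr_div_n exprMn (sqr_sqrtr (ltW L_gt0)) (sqr_sqrtr (ltW h_gt0)).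
suff -> : (24 * F * L ^+ 2) ^+ 2 * L / M0 ^+ 2 / h
    = 192 * (3 * N%:R ^+ 5 * h ^+ 4 * F ^+ 2 / M0 ^+ 2) by rewrite ler_pM2l.
by rewrite /h; field; rewrite !gt_eqF ?ltr0n.
Qed.
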